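(* Let $s\geq k\geq 2$ be integers and let $T=T(s,k)$, of order $n=s+k+1$. Then $\mu_2(T)=\frac{3-\sqrt{5}}{2}$ and $\mu_{n-1}(T)=\frac{3+\sqrt{5}}{2}$.
   Context: For a graph $G$ on $n$ vertices, the Laplacian matrix is $L(G)=D(G)-A(G)$, with $D(G)$ the diagonal degree matrix and $A(G)$ the adjacency matrix; its eigenvalues are denoted $0=\mu_1(G)\leq\mu_2(G)\leq\cdots\leq\mu_n(G)$. For integers $1\leq k\leq s$, the spider $T(s,k)$ is the tree obtained from the star $K_{1,s}$ by extending $k$ of its $s$ rays by one extra edge each; it has $s+k+1$ vertices. *)

From HB Require Import structures.
From mathcomp Require Import all_boot all_order all_algebra.
From mathcomp Require Import reals.
Set Implicit Arguments. Unset Strict Implicit. Unset Printing Implicit Defensive.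
Import Order.TTheory GRing.Theory Num.Theory.
Local Open Scope ring_scope.

(* Spider T(s,k) on vertex set {0,...,s+k}: vertex 0 is the center,
   vertices 1..s are the ends of the s rays of the star K_{1,s},
   and for 1 <= j <= k the vertex s+j is attached to vertex j
   (extending the j-th ray by one extra edge). *)
Definition spider_adj (s k : nat) (i j : nat) : bool :=
  [|| (i == 0%N) && (0 < j <= s)%N,
      (j == 0%N) && (0 < i <= s)%N,
      (0 < i <= k)%N && (j == i + s)%N
    | (0 < j <= k)%N && (i == j + s)%N].

Definition spider (s k : nat) : rel 'I_(s + k + 1) :=
  fun i j => spider_adj s k i j.

Definition deg (n : nat) (e : rel 'I_n) (i : 'I_n) : nat := #|[set j | e i j]|.

Definition laplacian (R : nzRingType) (n : nat) (e : rel 'I_n) : 'M[R]_n :=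
  \matrix_(i, j) (if i == j then (deg e i)%:R else - (e i j)%:R).

(* l is the list of eigenvalues (with multiplicity) of A, in nondecreasing
   order: mu_1 = l`_0 <= mu_2 = l`_1 <= ... <= mu_n = l`_(n-1). *)
Definition is_sorted_spectrum (R : realType) (n : nat) (A : 'M[R]_n)
  (l : seq R) : Prop :=
  sorted <=%R l /\ char_poly A = \prod_(x <- l) ('X - x%:P).

From mathcomp Require Import all_boot all_order all_algebra.
From mathcomp Require Import reals polyrcf.
From mathcomp Require Import ring lra zify.
Import Order.TTheory GRing.Theory Num.Theory.
Local Open Scope ring_scope.

(* Eliminating the vertices of T(s,k) from the leaves towards the centre
   triangularises x - L: the pivots are x - 1 at the s leaves,
   (x^2 - 3x + 1)/(x - 1) at the k middle vertices of the long rays, and a Schur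
   complement at the centre.  Hence
     det (x - L) * (x - 1) = x (x - 1)^(s-k) (x^2 - 3x + 1)^(k-1) g(x),
     g(x) = x^3 - (s+4) x^2 + (3s+4) x - (s+k+1).
   At the roots a < b of x^2 - 3x + 1 we get x g(x) = -k (x - 1)^2 < 0, while
   g(1) = s - k >= 0, so g has two roots in (a, b) and one above b.  Together
   with an extra eigenvalue 1 the spectrum is 0, the roots of g, a and b (k - 1
   times each) and 1 (s - k times): exactly one eigenvalue lies below a and a
   occurs because k >= 2, so mu_2 = a; symmetrically mu_(n-1) = b. *)

Lemma big_ord_in_seq {R : Type} {idx : R} {op : Monoid.com_law idx} {n : nat}
    {N : seq nat} (F : nat -> R) :
  uniq N -> all (fun j => j < n)%N N ->
  \big[op/idx]_(j < n | val j \in N) F j = \big[op/idx]_(j <- N) F j.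
Proof.
move=> N_uniq /allP N_lt; rewrite -(big_mkord (fun j => j \in N)) -big_filter.
apply: perm_big; apply: uniq_perm; rewrite ?filter_uniq ?iota_uniq // => j.
by rewrite mem_filter andb_idr // mem_index_iota => /N_lt.
Qed.

Lemma horner_char_poly (R : comNzRingType) n (A : 'M[R]_n) (x : R) :
  (char_poly A).[x] = \det (x%:M - A).
Proof.
rewrite /char_poly -[_.[x]]/(horner_eval x _) -det_map_mx; congr (\det _).
apply/matrixP => i j; rewrite !mxE /= /horner_eval.
by rewrite hornerD hornerN hornerMn hornerC hornerX.
Qed.

Lemma eq_poly_on_ge (R : numDomainType) (c : R) (p r : {poly R}) :
  (forall x, c <= x -> p.[x] = r.[x]) -> p = r.
Proof.
move=> pr_ge; apply/eqP; rewrite -subr_eq0; apply: contraT => pr_neq0.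
have := @max_poly_roots _ (p - r) [seq c + i%:R | i <- iota 0 (size (p - r))] pr_neq0.
rewrite size_map size_iota ltnn; apply.
  apply/allP => _ /mapP[i _ ->]; rewrite /root hornerD hornerN pr_ge ?subrr //.
  by rewrite lerDl ler0n.
by rewrite map_inj_uniq ?iota_uniq // => i j /addrI /eqP; rewrite eqr_nat => /eqP.
Qed.

Lemma prod_XsubC_rem {R : idomainType} {p : {poly R}} {c : R} {t : seq R} :
  p * ('X - c%:P) = \prod_(y <- t) ('X - y%:P) ->
  p = \prod_(y <- rem c t) ('X - y%:P).
Proof.
move=> pt; have ct : c \in t.
  by rewrite -root_prod_XsubC -pt rootM root_XsubC eqxx orbT.
apply: (@mulIf _ ('X - c%:P)); first by rewrite polyXsubC_eq0.
by rewrite pt (perm_big _ (perm_to_rem ct)) big_cons mulrC.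
Qed.

Section SortedNth.
Local Open Scope order_scope.

Lemma sorted_nth1 {disp : Order.disp_t} {T : orderType disp} (x0 a : T) (l : seq T) :
  sorted <=%O l -> count (fun y => y < a) l = 1%N -> a \in l -> nth x0 l 1 = a.
Proof.
case: l => [//|y0 t] /= t_path; have t_ge_y0 := order_path_min le_trans t_path.
have [y0_lt_a|a_le_y0] := ltP y0 a; last first.
  rewrite add0n => t_lt_a _; have /hasP[y yt] : has (fun y => y < a) t.
    by rewrite has_count t_lt_a.
  by rewrite ltNge (le_trans a_le_y0 (allP t_ge_y0 y yt)).
rewrite add1n inE (gt_eqF y0_lt_a) /= => -[/eqP].
rewrite -leqn0 leqNgt -has_count => /hasPn t_ge_a a_t.
case: t t_path t_ge_a a_t {t_ge_y0} => [//|y1 t] /= /andP[_ t_path] t_ge_a.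
have a_le_y1 : a <= y1 by rewrite leNgt (t_ge_a y1 (mem_head _ _)).
rewrite inE => /predU1P[//|a_t]; apply/eqP; rewrite eq_le a_le_y1 andbT.
exact: allP (order_path_min le_trans t_path) a a_t.
Qed.

Lemma sorted_nth_size2 {disp : Order.disp_t} {T : orderType disp} (x0 b : T)
    (l : seq T) :
  sorted <=%O l -> count (fun y => b < y) l = 1%N -> b \in l ->
  nth x0 l (size l - 2) = b.
Proof.
move=> l_sorted l_gt_b b_l.
have size_l : (1 < size l)%N.
  rewrite -(count_predC (fun y => b < y)) l_gt_b ltnS lt0n -lt0n -has_count.
  by apply/hasP; exists b; rewrite //= ltxx.
rewrite -(nth_rev x0 size_l).
apply: (@sorted_nth1 _ T^d); rewrite ?count_rev ?mem_rev //.
by rewrite rev_sorted.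
Qed.
End SortedNth.

Lemma quadratic_split (R : rcfType) (c1 c0 a b : R) :
  a < b -> 0 < a ^+ 2 + c1 * a + c0 -> b ^+ 2 + c1 * b + c0 < 0 ->
  exists r2 r3, [/\ a < r2 < b, b < r3 &
    forall x, x ^+ 2 + c1 * x + c0 = (x - r2) * (x - r3)].
Proof.
move=> ab ha hb; pose h : {poly R} := - ('X^2 + c1%:P * 'X + c0%:P).
have hE x : h.[x] = - (x ^+ 2 + c1 * x + c0) by rewrite !hornerE.
have [r2 /andP[ar2 r2b]] : exists2 r2, a <= r2 <= b & root h r2.
  by apply: poly_ivt; rewrite ?ltW // !hE ?oppr_gt0 ?oppr_lt0.
rewrite /root hE oppr_eq0 => /eqP hr2.
have hsplit x : x ^+ 2 + c1 * x + c0 = (x - r2) * (x - (- c1 - r2)).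
  by rewrite -[LHS]subr0 -hr2; ring.
have a_r2 : a < r2.
  by rewrite lt_neqAle ar2 andbT; apply: contraTneq ha => ->; rewrite hr2 ltxx.
have r2_b : r2 < b.
  by rewrite lt_neqAle r2b andbT; apply: contraTneq hb => <-; rewrite hr2 ltxx.
exists r2, (- c1 - r2); split; rewrite ?a_r2 ?r2_b //.
by move: hb; rewrite hsplit; nra.
Qed.

Definition spider_cubic (R : nzRingType) (s k : nat) : {poly R} :=
  'X^3 - (s + 4)%N%:R%:P * 'X^2 + (3 * s + 4)%N%:R%:P * 'X - (s + k + 1)%N%:R%:P.

Lemma horner_spider_cubic (R : comNzRingType) (s k : nat) (x : R) :
  (spider_cubic R s k).[x] =
  x ^+ 3 - (s + 4)%N%:R * x ^+ 2 + (3 * s + 4)%N%:R * x - (s + k + 1)%N%:R.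
Proof. by rewrite /spider_cubic !hornerE. Qed.

Lemma spider_cubic_mulX (R : comNzRingType) (s k : nat) (x : R) : (k <= s)%N ->
  x * (spider_cubic R s k).[x] = (x - s%:R) * (x - 1) * (x ^+ 2 - 3 * x + 1)
    - (s - k)%:R * (x ^+ 2 - 3 * x + 1) - k%:R * (x - 1) ^+ 2.
Proof.
by move=> /subnKC <-; rewrite addKn horner_spider_cubic !natrD; ring.
Qed.

Lemma horner1_spider_cubic (R : comNzRingType) (s k : nat) : (k <= s)%N ->
  (spider_cubic R s k).[1] = (s - k)%:R.
Proof.
by move=> /subnKC <-; rewrite addKn horner_spider_cubic !natrD; ring.
Qed.

Lemma sorted_spectrum_size {R : realType} {n : nat} {A : 'M[R]_n} {l : seq R} :
  is_sorted_spectrum A l -> size l = n.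
Proof.
move=> [_ charA]; apply: succn_inj.
by rewrite -(size_char_poly A) charA size_prod_XsubC.
Qed.

Section SortedSpectrum.
Context {R : realType} {n : nat} {A : 'M[R]_n} {c : R} {t : seq R}.
Hypothesis charA : char_poly A * ('X - c%:P) = \prod_(y <- t) ('X - y%:P).

Lemma sorted_spectrum_exists : exists l, is_sorted_spectrum A l.
Proof.
exists (sort <=%R (rem c t)); split; first exact: (sort_sorted le_total).
by rewrite (prod_XsubC_rem charA); apply: perm_big; rewrite perm_sym perm_sort.
Qed.

Lemma sorted_spectrum_perm {l : seq R} :
  is_sorted_spectrum A l -> perm_eq (c :: l) t.
Proof.
by move=> [_ charl]; apply: prod_XsubC_eq; rewrite big_cons -charl mulrC charA.
Qed.

End SortedSpectrum.

Section SpiderCharPoly.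
Variables (R : numFieldType) (s k : nat).
Hypotheses (k_gt0 : (0 < k)%N) (k_le_s : (k <= s)%N).
Local Notation n := (s + k + 1)%N.
Local Notation L := (laplacian R (@spider s k)).
Local Notation q x := (x ^+ 2 - 3 * x + 1).

Definition spider_nbrs (i : nat) : seq nat :=
  if i == 0%N then iota 1 s
  else if (i <= k)%N then [:: 0%N; i + s]
  else if (i <= s)%N then [:: 0%N]
  else [:: i - s]%N.

Lemma spider_adjE (i j : nat) : (i < n)%N ->
  spider_adj s k i j = (j \in spider_nbrs i).
Proof.
rewrite /spider_adj /spider_nbrs => i_lt.
by case: ifP => [/eqP->|i0]; [|case: ifP => ik; [|case: ifP => i_s]];
  rewrite ?mem_iota ?inE; lia.
Qed.

Lemma spider_nbrs_uniq (i : nat) : uniq (spider_nbrs i).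
Proof.
rewrite /spider_nbrs; case: ifP => [_|i0]; first exact: iota_uniq.
by case: ifP => _; [rewrite /= inE andbT; lia | case: ifP].
Qed.

Lemma spider_nbrs_lt (i : nat) : (i < n)%N -> all (fun j => j < n)%N (spider_nbrs i).
Proof.
rewrite /spider_nbrs => i_lt; case: ifP => _.
  by apply/allP => j; rewrite mem_iota; lia.
by case: ifP => ?; [|case: ifP => ?]; rewrite /= ?andbT; lia.
Qed.

Lemma spider_nbrs_irr (i : nat) : i \notin spider_nbrs i.
Proof.
rewrite /spider_nbrs; case: ifP => [/eqP->|i0]; first by rewrite mem_iota.
by case: ifP => _; [|case: ifP => _]; rewrite !inE; lia.
Qed.

Lemma spider_deg (i : 'I_n) : deg (@spider s k) i = size (spider_nbrs i).
Proof.
rewrite /deg -sum1_card -sum1_size -(big_ord_in_seq (n := n) (fun=> 1%N)).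
- by apply: eq_bigl => j; rewrite inE /spider spider_adjE.
- exact: spider_nbrs_uniq.
- exact: spider_nbrs_lt.
Qed.

Lemma spider_charmx_sum (x : R) (i : 'I_n) (u : nat -> R) :
  \sum_(l < n) (x%:M - L) i l * u l =
  (x - (size (spider_nbrs i))%:R) * u i + \sum_(l <- spider_nbrs i) u l.
Proof.
have entry (l : 'I_n) : (x%:M - L) i l =
    (x - (size (spider_nbrs i))%:R) *+ (i == l) + (spider_adj s k i l)%:R.
  rewrite !mxE -spider_deg; case: eqVneq => [<-|_].
    by rewrite spider_adjE // (negbTE (spider_nbrs_irr i)) addr0.
  by rewrite sub0r opprK add0r.
under eq_bigr => l _ do rewrite entry mulrDl.
rewrite big_split /= (bigD1 i) //= eqxx mulr1n big1 ?addr0; last first.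
  by move=> l; rewrite eq_sym => /negbTE->; rewrite mul0r.
rewrite -(big_ord_in_seq u (spider_nbrs_uniq i) (spider_nbrs_lt _ (ltn_ord i))).
rewrite [X in _ = _ + X]big_mkcond; congr (_ + _); apply: eq_bigr => l _.
by rewrite spider_adjE //; case: (_ \in _); rewrite ?mul1r ?mul0r.
Qed.

(* Column 0 solves (x - L) u = 0 away from the centre, with u 0 = 1; column j of
   a long ray subtracts the column of its leaf j + s. *)
Definition spider_elim_col (x : R) (j l : nat) : R :=
  if j == 0%N then
    if l == 0%N then 1
    else if (l <= k)%N then - (x - 1) / q x
    else if (l <= s)%N then - (x - 1)^-1
    else (q x)^-1
  else if (j <= k)%N && (l == j + s)%N then - (x - 1)^-1
  else (l == j)%:R.

Definition spider_elim (x : R) : 'M[R]_n := \matrix_(l, j) spider_elim_col x j l.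

Definition spider_pivot (x : R) (i : nat) : R :=
  if i == 0%N then x - s%:R - k%:R * (x - 1) / q x - (s - k)%:R / (x - 1)
  else if (i <= k)%N then q x / (x - 1)
  else x - 1.

Lemma det_spider_elim (x : R) : \det (spider_elim x) = 1.
Proof.
rewrite det_trig.
  rewrite big1 // => i _; rewrite mxE /spider_elim_col.
  by case: ifP => [/eqP->//|_]; rewrite eqxx; case: ifP => //; lia.
apply/is_trig_mxP => l j lj; rewrite mxE /spider_elim_col (ltn_eqF lj).
by case: ifP => [/eqP j0|_]; [rewrite j0 in lj | case: ifP => //; lia].
Qed.

Lemma spider_elim_center_sum (x : R) :
  \sum_(l <- iota 1 s) spider_elim_col x 0 l =
  - (k%:R * (x - 1) / q x) - (s - k)%:R / (x - 1).
Proof.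
rewrite -[s in iota 1 s](subnKC k_le_s) iotaD big_cat /=.
rewrite (eq_big_seq (fun=> - (x - 1) / q x)); last first.
  move=> l; rewrite mem_iota /spider_elim_col /= => l_k.
  by do ![case: ifP => ?] => //; lia.
rewrite [X in _ + X](eq_big_seq (fun=> - (x - 1)^-1)); last first.
  move=> l; rewrite mem_iota /spider_elim_col /= => l_s.
  by do ![case: ifP => ?] => //; lia.
rewrite !big_const_seq !count_predT !size_iota !iter_addr_0.
by rewrite -[_ *+ k]mulr_natl -[_ *+ (s - k)]mulr_natl; ring.
Qed.

Lemma spider_elim_col_pivot (x : R) (i j : nat) :
  x != 1 -> q x != 0 -> (j <= i < n)%N ->
  (x - (size (spider_nbrs i))%:R) * spider_elim_col x j i +
    \sum_(l <- spider_nbrs i) spider_elim_col x j l = (i == j)%:R * spider_pivot x i.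
Proof.
rewrite -subr_eq0 => x1 qx ji.
have [i0|i0] := eqVneq i 0%N.
  have -> : j = 0%N by lia.
  rewrite i0 /spider_nbrs /= spider_elim_center_sum size_iota.
  by rewrite /spider_pivot /spider_elim_col /=; ring.
rewrite /spider_nbrs /spider_pivot (negbTE i0).
case: ifP => ik; [|case: ifP => i_s]; rewrite !big_cons big_nil /spider_elim_col /=.
all: do ![case: ifP => ?] => //=; try lia.
all: do ![case: eqP => ?] => /=; try lia.
all: by field; rewrite ?x1 ?qx.
Qed.

Lemma spider_charmx_elimE (x : R) (i j : 'I_n) :
  x != 1 -> q x != 0 -> (j <= i)%N ->
  ((x%:M - L) *m spider_elim x) i j = (i == j)%:R * spider_pivot x i.
Proof.
move=> x1 qx ji; rewrite mxE; under eq_bigr => l _ do rewrite [spider_elim _ _ _]mxE.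
by rewrite spider_charmx_sum spider_elim_col_pivot // ji ltn_ord.
Qed.

Lemma det_spider_charmx (x : R) : x != 1 -> q x != 0 ->
  \det (x%:M - L) = \prod_(i < n) spider_pivot x i.
Proof.
move=> x1 qx; transitivity (\det ((x%:M - L) *m spider_elim x)).
  by rewrite det_mulmx det_spider_elim mulr1.
rewrite -det_tr det_trig.
  by apply: eq_bigr => i _; rewrite mxE spider_charmx_elimE // eqxx mul1r.
apply/is_trig_mxP => i j ij; rewrite mxE spider_charmx_elimE ?(ltnW ij) //.
by rewrite -val_eqE /= gtn_eqF ?mul0r.
Qed.

Lemma prod_spider_pivot (x : R) :
  \prod_(i < n) spider_pivot x i =
  spider_pivot x 0 * (q x / (x - 1)) ^+ k * (x - 1) ^+ s.
Proof.
rewrite -(big_mkord xpredT) (big_cat_nat (n := 1)) //=; last by lia.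
rewrite big_nat1 (big_cat_nat (n := k.+1)) //=; last by lia.
rewrite -mulrA; congr (_ * (_ * _)).
  rewrite (eq_big_nat _ _ (F2 := fun=> q x / (x - 1))) ?prodr_const_nat ?subn1 //.
  by move=> i ik; rewrite /spider_pivot ifF ?ifT //; lia.
rewrite (eq_big_nat _ _ (F2 := fun=> x - 1)) ?prodr_const_nat; last first.
  by move=> i ik; rewrite /spider_pivot ifF ?ifF //; lia.
by congr (_ ^+ _); lia.
Qed.

Lemma det_spider_charmx_mul (x : R) : x != 1 -> q x != 0 ->
  \det (x%:M - L) * (x - 1) =
  x * (x - 1) ^+ (s - k) * q x ^+ k.-1 * (spider_cubic R s k).[x].
Proof.
move=> x1 qx; have x1' : x - 1 != 0 by rewrite subr_eq0.
have center : x * (spider_cubic R s k).[x] = spider_pivot x 0 * (x - 1) * q x.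
  by rewrite spider_cubic_mulX // /spider_pivot /=; field; rewrite x1' qx.
transitivity ((x - 1) ^+ (s - k) * q x ^+ k.-1 * (x * (spider_cubic R s k).[x]));
  last by ring.
rewrite center det_spider_charmx // prod_spider_pivot expr_div_n.
have -> : (x - 1) ^+ s = (x - 1) ^+ k * (x - 1) ^+ (s - k) by rewrite -exprD subnKC.
have -> : q x ^+ k = q x * q x ^+ k.-1 by rewrite -exprS prednK.
by field; rewrite expf_neq0.
Qed.

Lemma char_poly_spider :
  char_poly L * ('X - 1) =
  'X * ('X - 1) ^+ (s - k) * ('X^2 - 3%:P * 'X + 1) ^+ k.-1 * spider_cubic R s k.
Proof.
apply: (@eq_poly_on_ge _ 3) => x x_ge3.
have x_gt1 : 1 < x by apply: lt_le_trans x_ge3; rewrite ltr1n.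
have qx_gt0 : 0 < q x.
  rewrite (_ : q x = x * (x - 3) + 1); last by ring.
  by rewrite ltr_wpDl // mulr_ge0 ?subr_ge0 // ltW // (lt_trans ltr01).
rewrite hornerM horner_char_poly hornerXsubC det_spider_charmx_mul ?gt_eqF //.
by rewrite !hornerM !horner_exp hornerX hornerXsubC !hornerE.
Qed.

End SpiderCharPoly.

Section SpiderSpectrum.
Variable R : rcfType.
Local Notation a := ((3 - Num.sqrt 5) / 2 : R).
Local Notation b := ((3 + Num.sqrt 5) / 2 : R).

Lemma sqrt5_roots :
  [/\ 0 < a, a < 1, 1 < b & 'X^2 - 3%:P * 'X + 1 = ('X - a%:P) * ('X - b%:P)].
Proof.
have t2 : Num.sqrt 5 ^+ 2 = 5 :> R by rewrite sqr_sqrtr // ler0n.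
have t_ge0 : 0 <= Num.sqrt 5 :> R by exact: sqrtr_ge0.
have t_gt2 : 2 < Num.sqrt 5 :> R by nra.
have t_lt3 : Num.sqrt 5 < 3 :> R by nra.
split; [lra | lra | lra |].
by apply: (@eq_poly_on_ge _ 0) => x _; rewrite !hornerE; nra.
Qed.

Variables (s k : nat).
Hypotheses (k_gt0 : (0 < k)%N) (k_le_s : (k <= s)%N).

Lemma spider_cubic_split : exists r1 r2 r3 : R,
  [/\ a < r1 < b, a < r2 < b, b < r3 &
      spider_cubic R s k = ('X - r1%:P) * ('X - r2%:P) * ('X - r3%:P)].
Proof.
have [a_gt0 a_lt1 b_gt1 qE] := sqrt5_roots.
have qF y : y ^+ 2 - 3 * y + 1 = (y - a) * (y - b).
  by move: (congr1 (horner^~ y) qE); rewrite !hornerE.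
have g_lt0 y : 0 < y -> y ^+ 2 - 3 * y + 1 = 0 -> (spider_cubic R s k).[y] < 0.
  move=> y_gt0 qy; have y_neq1 : y - 1 != 0.
    by apply/eqP => /subr0_eq y1; move: qy; rewrite y1 expr1n; lra.
  rewrite -(pmulr_rlt0 _ y_gt0) spider_cubic_mulX // qy !mulr0 sub0r oppr0 sub0r.
  by rewrite oppr_lt0 mulr_gt0 ?ltr0n // exprn_even_gt0.
have ga : (spider_cubic R s k).[a] < 0 by rewrite g_lt0 // qF subrr mul0r.
have gb : (spider_cubic R s k).[b] < 0.
  by rewrite g_lt0 ?qF ?subrr ?mulr0 //; lra.
have [r1 /andP[ar1 r1_le1] /rootP gr1] :
    exists2 r1, a <= r1 <= 1 & root (spider_cubic R s k) r1.
  apply: poly_ivt; rewrite ?(ltW a_lt1) //.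
  by rewrite (ltW ga) horner1_spider_cubic // ler0n.
have a_r1 : a < r1.
  by rewrite lt_neqAle ar1 andbT; apply: contraTneq ga => ->; rewrite gr1 ltxx.
pose c1 := r1 - (s + 4)%N%:R.
pose c0 := r1 ^+ 2 - (s + 4)%N%:R * r1 + (3 * s + 4)%N%:R.
have gF x : (spider_cubic R s k).[x] = (x - r1) * (x ^+ 2 + c1 * x + c0).
  by rewrite -[LHS]subr0 -gr1 !horner_spider_cubic /c1 /c0; ring.
have [|||r2 [r3 [ar2b br3 hF]]] := @quadratic_split _ c1 c0 a b; first lra.
- by move: ga; rewrite gF nmulr_rlt0 // subr_lt0.
- by move: gb; rewrite gF pmulr_rlt0 // subr_gt0; lra.
exists r1, r2, r3; split; rewrite ?a_r1 //=; first lra.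
by apply: (@eq_poly_on_ge _ 0) => x _; rewrite gF hF !hornerE.
Qed.

Lemma char_poly_spider_split : exists r1 r2 r3 : R,
  [/\ a < r1 < b, a < r2 < b, b < r3 &
      char_poly (laplacian R (@spider s k)) * ('X - 1%:P) =
      \prod_(y <- [:: 0; r1; r2; r3] ++ nseq k.-1 a ++ nseq k.-1 b ++ nseq (s - k) 1)
        ('X - y%:P)].
Proof.
have [r1 [r2 [r3 [r1_ab r2_ab b_r3 gE]]]] := spider_cubic_split.
exists r1, r2, r3; split=> //; have [_ _ _ qE] := sqrt5_roots.
rewrite polyC1 char_poly_spider // gE qE !big_cat /= !big_cons big_nil.
by rewrite !big_nseq !iter_mulr_1 subr0 exprMn; ring.
Qed.

End SpiderSpectrum.

Theorem lemma3p3 (R : realType) (s k : nat) (hk : (2 <= k)%N) (hks : (k <= s)%N) :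
  (exists l : seq R, is_sorted_spectrum (laplacian R (@spider s k)) l) /\
  (forall l : seq R, is_sorted_spectrum (laplacian R (@spider s k)) l ->
     l`_1 = (3 - Num.sqrt 5) / 2 /\
     l`_((s + k + 1) - 2) = (3 + Num.sqrt 5) / 2).
Proof.
have k_gt0 : (0 < k)%N by lia.
have [a_gt0 a_lt1 b_gt1 _] := sqrt5_roots R.
have [r1 [r2 [r3 [/andP[a_r1 r1_b] /andP[a_r2 r2_b] b_r3 charL]]]] :=
  char_poly_spider_split R s k k_gt0 hks.
set a := (3 - Num.sqrt 5) / 2 in a_gt0 a_lt1 a_r1 a_r2 charL *.
set b := (3 + Num.sqrt 5) / 2 in b_gt1 r1_b r2_b b_r3 charL *.
set t := (X in \prod_(y <- X) _) in charL.
split=> [|l spec_l]; first exact: sorted_spectrum_exists charL.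
have [l_sorted _] := spec_l; have perm_l := sorted_spectrum_perm charL spec_l.
have /permP count_l := perm_l.
have mem_l y : y \in t -> y != 1 -> y \in l.
  by rewrite -(perm_mem perm_l) inE => /predU1P[->|//]; rewrite eqxx.
have mem_ab y : y \in [:: a; b] -> y \in t.
  by rewrite !inE /t !mem_cat !mem_nseq -ltnS prednK // hk => /orP[]->; rewrite !orbT.
have a_b : a < b by apply: lt_trans b_gt1.
split.
  apply: sorted_nth1 => //; last by rewrite mem_l ?mem_ab ?inE ?eqxx ?lt_eqF.
  move: (count_l (fun y => y < a)); rewrite /= !count_cat !count_nseq /=.
  rewrite a_gt0 ltxx (lt_gtF a_lt1) (lt_gtF a_r1) (lt_gtF a_r2) (lt_gtF a_b).
  by rewrite (lt_gtF (lt_trans a_b b_r3)) !mul0n !add0n !addn0.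
rewrite -(sorted_spectrum_size spec_l); apply: sorted_nth_size2 => //; last first.
  by rewrite mem_l ?mem_ab ?inE ?eqxx ?orbT ?gt_eqF.
move: (count_l (fun y => b < y)); rewrite /= !count_cat !count_nseq /=.
rewrite b_r3 ltxx (lt_gtF b_gt1) (lt_gtF r1_b) (lt_gtF r2_b) (lt_gtF a_b).
by rewrite (lt_gtF (lt_trans a_gt0 a_b)) !mul0n !add0n !addn0.
Qed.
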